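(* Let $\Omega\subset\mathbb{R}^N$ be a bounded domain with smooth boundary, $0<s<1$, $M$ a Young function satisfying $1<m_0:=\inf_{t>0}\frac{tm(t)}{M(t)}\le m^0:=\sup_{t>0}\frac{tm(t)}{M(t)}<\infty$, (S) $t\mapsto M(\sqrt t)$ convex on $[0,\infty)$, and (Q) $\lim_{t\to+\infty}|t|^q/M(t)=0$, where $1<q<\min(p^*,m_0)$, $p^*=Np/(N-p)$ for a fixed $1<p<N$. Let $g:\Omega\times\mathbb{R}\to\mathbb{R}$ be Carathéodory with $G(x,t)=\int_0^t g(x,\tau)d\tau$ satisfying (A) $|g(x,t)|\le C_0|t|^{q-1}$ and (B) $C_1|t|^q\le G(x,t)\le C_2|t|^q$ for all $x\in\Omega,t\in\mathbb{R}$, with $C_0,C_1,C_2>0$. Let $$I_\lambda(u)=\int_{\mathbb{R}^N}\int_{\mathbb{R}^N}M\Big(\frac{u(x)-u(y)}{|x-y|^s}\Big)\frac{dx\,dy}{|x-y|^N}-\lambda\int_\Omega G(x,u)\,dx.$$ Then there exists $\lambda^*>0$ such that for every $\lambda\in(0,\lambda^* )$ there exist $\rho>0$ and $\alpha>0$ with $I_\lambda(u)\ge\alpha$ for all $u\in\tilde W^{s,M}_0(\Omega)$ with $\|u\|=\rho$.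
   Context: A Young function is $M(t)=\int_0^{|t|}m(\tau)\,d\tau$, where $m:\mathbb{R}\to\mathbb{R}$ is an increasing homeomorphism of $\mathbb{R}$ onto $\mathbb{R}$ with $m(0)=0$, $m(t)>0$ for $t>0$, $m(t)\to\infty$ as $t\to\infty$. $L^M$ is the Orlicz space with Luxemburg norm $\|u\|_{(M)}=\inf\{\lambda>0:\int M(u/\lambda)\le1\}$. $W^{s,M}(\mathbb{R}^N)$ is the set of $u\in L^M(\mathbb{R}^N)$ with $\int\int M\big(\frac{u(x)-u(y)}{|x-y|^s}\big)\frac{dxdy}{|x-y|^N}<\infty$, with seminorm $[u]_{(s,M)}=\inf\{\lambda>0:\int\int M\big(\frac{u(x)-u(y)}{\lambda|x-y|^s}\big)\frac{dxdy}{|x-y|^N}\le1\}$ and norm $\|u\|_{(s,M)}=\|u\|_{(M)}+[u]_{(s,M)}$. $\tilde W^{s,M}_0(\Omega)$ is the space of functions in the closure $W^{s,M}_0(\Omega)$ of $C_c^\infty(\Omega)$ in $\|\cdot\|_{(s,M)}$ which vanish a.e. in $\mathbb{R}^N\setminus\Omega$, normed by $\|u\|=[u]_{(s,M)}$. *)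

From mathcomp Require Import all_boot all_order all_algebra.
From mathcomp Require Import all_classical all_reals all_analysis.
Set Implicit Arguments. Unset Strict Implicit. Unset Printing Implicit Defensive.
Import Order.TTheory GRing.Theory Num.Theory.
Local Open Scope ring_scope.
Local Open Scope classical_set_scope.

(* R^N, represented as row vectors, with its canonical (normed) topology. *)
Notation Rn R N := (matrix_matrix__canonical__normed_module_NormedModule R 1 N).

Section Defs.
Variables (R : realType) (N : nat).
Implicit Types (x y : Rn R N) (u : Rn R N -> R).

Definition enorm x : R := Num.sqrt (\sum_(i < N) (x 0 i) ^+ 2).

Definition borelRn : set (set (Rn R N)) := <<s open >>.
Definition borel_fun u : Prop :=
  forall B : set R, measurable B -> borelRn (u @^-1` B).

Definition setcoord x (k : nat) (t : R) : Rn R N :=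
  \row_(j < N) (if (j : nat) == k then t else x 0 j).

(* Lebesgue integral over R^N of a nonnegative function, computed as an
   iterated one-dimensional Lebesgue integral (Tonelli). *)
Fixpoint iint (k : nat) (f : Rn R N -> \bar R) (x : Rn R N) : \bar R :=
  match k with
  | 0 => f x
  | k'.+1 => (\int[@lebesgue_measure R]_(t in [set: R]) iint k' f (setcoord x k' t))%E
  end.
Definition intRn (f : Rn R N -> \bar R) : \bar R := iint N f 0.

Definition nullRn (A : set (Rn R N)) : Prop :=
  borelRn A /\ intRn (fun x => (\1_A x)%:E) = 0%E.

Fixpoint iterD (vs : seq (Rn R N)) (f : Rn R N -> R) : Rn R N -> R :=
  match vs with
  | [::] => f
  | v :: vs' => 'D_v (iterD vs' f)
  end.
Definition smooth (f : Rn R N -> R) : Prop :=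
  forall vs : seq (Rn R N), continuous (iterD vs f : Rn R N -> R^o) /\
    forall x v, derivable (iterD vs f) x v.

Definition Cc_infty (Om : set (Rn R N)) (f : Rn R N -> R) : Prop :=
  smooth f /\ compact (closure [set x | f x != 0]) /\
  closure [set x | f x != 0] `<=` Om.

Definition smooth_bounded_domain (Om : set (Rn R N)) : Prop :=
  [/\ open Om, connected Om, Om !=set0,
      (exists C : R, forall x, Om x -> enorm x <= C) &
      forall x0, (closure Om `\` Om) x0 ->
        exists (r : R) (psi : Rn R N -> R), [/\ 0 < r, smooth psi,
          (forall x, ball x0 r x -> (Om x <-> psi x < 0)) &
          (forall x, ball x0 r x -> psi x = 0 -> exists v, 'D_v psi x != 0)]].
End Defs.

Definition young_m (R : realType) (m : R -> R) : Prop :=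
  [/\ continuous (m : R^o -> R^o), {homo m : x y / x < y}, (forall y, exists x, m x = y),
      m 0 = 0 & (m : R^o -> R^o) x @[x --> +oo] --> +oo].

Definition YoungM (R : realType) (m : R -> R) (t : R) : R :=
  fine (\int[@lebesgue_measure R]_(tau in `[0%R, `|t|%R]) (m tau)%:E)%E.

Definition m_low (R : realType) (m : R -> R) : R :=
  inf [set t * m t / YoungM m t | t in `]0, +oo[].
Definition m_up_finite (R : realType) (m : R -> R) : Prop :=
  has_ubound [set t * m t / YoungM m t | t in `]0, +oo[].

Definition cond_S (R : realType) (M : R -> R) : Prop :=
  forall a b th : R, 0 <= a -> 0 <= b -> 0 <= th <= 1 ->
    M (Num.sqrt (th * a + (1 - th) * b)) <=
      th * M (Num.sqrt a) + (1 - th) * M (Num.sqrt b).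

Section Spaces.
Variables (R : realType) (N : nat) (M : R -> R) (s : R).
Implicit Types (u : Rn R N -> R).

Definition modular u (l : R) : \bar R :=
  intRn (fun x => (M (u x / l))%:E).
Definition smodular u (l : R) : \bar R :=
  intRn (fun x => intRn (fun y =>
    (M ((u x - u y) / (l * enorm (x - y) `^ s)) / enorm (x - y) `^ N%:R)%:E)).

Definition luxnorm u : R := inf [set l : R | 0 < l /\ (modular u l <= 1)%E].
Definition seminorm u : R := inf [set l : R | 0 < l /\ (smodular u l <= 1)%E].
Definition WsMnorm u : R := luxnorm u + seminorm u.

Definition WsM u : Prop :=
  [/\ borel_fun u, (exists l : R, 0 < l /\ (modular u l < +oo)%E) &
      (smodular u 1 < +oo)%E].

Definition WsM0t (Om : set (Rn R N)) u : Prop :=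
  [/\ WsM u,
      (forall e : R, 0 < e -> exists phi, Cc_infty Om phi /\
          WsMnorm (fun x => u x - phi x) < e) &
      exists Z, nullRn Z /\ [set x | ~ Om x /\ u x != 0] `<=` Z].
End Spaces.

Definition primG (R : realType) (N : nat) (g : Rn R N -> R -> R) x (t : R) : R :=
  if 0 <= t then fine (\int[@lebesgue_measure R]_(tau in `[0%R, t]) (g x tau)%:E)%E
  else - fine (\int[@lebesgue_measure R]_(tau in `[t, 0%R]) (g x tau)%:E)%E.

Definition caratheodory (R : realType) (N : nat) (Om : set (Rn R N))
    (g : Rn R N -> R -> R) : Prop :=
  (forall t, borel_fun (fun x => g x t * \1_Om x)) /\
  (forall x, Om x -> continuous (g x : R^o -> R^o)).

Definition I_lam (R : realType) (N : nat) (M : R -> R) (s : R) (Om : set (Rn R N))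
    (g : Rn R N -> R -> R) (lam : R) (u : Rn R N -> R) : \bar R :=
  (smodular M s u 1 - lam%:E * intRn (fun x => (primG g x (u x) * \1_Om x)%:E))%E.

From mathcomp Require Import all_boot all_order all_algebra.
From mathcomp Require Import all_classical all_reals all_analysis.
Import Order.TTheory GRing.Theory Num.Theory.
Local Open Scope ring_scope.
Local Open Scope classical_set_scope.
From mathcomp Require Import ring lra measurable_realfun.

(* Since u vanishes outside Omega, the Gagliardo modular of u controls its
   Orlicz modular on Omega.  Put Omega inside [-C, C]^N and let Q be the unit
   cube [C+1, C+2]^N: every x in Omega and y in Q satisfy 1 <= |x - y| <= D,
   and u(y) = 0 for a.e. y in Q, so the kernel
   M((u(x) - u(y)) / |x - y|^s) / |x - y|^N is at least M(u(x) / D^s) / D^N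
   there.  Integrating over Q gives  int_Omega M(u / D^s) <= D^N S, where S is
   the Gagliardo modular of u.  The growth conditions (B) and (Q) give
   G(x, u) <= C2 D^(sq) (M(u / D^s) + T^q), hence  int_Omega G(x, u) <= A S + B.
   On the sphere ||u|| = 2 the Luxemburg seminorm forces S > 1, so
   I_lambda(u) >= S - lambda (A S + B) >= 1/2 once lambda (A + B + 1) < 1/4. *)

Set Implicit Arguments. Unset Strict Implicit.

Section CylinderSigmaAlgebra.
Variables (R : realType) (N : nat).

Definition coord_cylinders : set (set (Rn R N)) :=
  [set A | exists (i : 'I_N) (B : set R),
     measurable B /\ A = [set x : Rn R N | B (x ord0 i)]].

(* The product sigma-algebra of R^N: it contains the open sets (countable
   unions of rational boxes), and Fubini-Tonelli makes the iterated integral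
   [iint] measurable for it. *)
Definition cylRn := g_sigma_algebraType coord_cylinders.

Lemma measurable_cylinder i (B : set R) : measurable B ->
  measurable ([set x | B (x ord0 i)] : set cylRn).
Proof. by move=> mB; apply: sub_sigma_algebra; exists i, B. Qed.

Lemma measurable_coord_bigcap (P : 'I_N -> R -> Prop) :
  (forall i, measurable [set t | P i t]) ->
  measurable ([set x | forall i, P i (x ord0 i)] : set cylRn).
Proof.
move=> mP.
have -> : ([set x | forall i, P i (x ord0 i)] : set cylRn) =
    \bigcap_(i in [set: 'I_N]) [set x | P i (x ord0 i)].
  by apply/seteqP; split => x /= Px i; [move=> _ |]; exact: Px.
by apply: fin_bigcap_measurable => // i _; exact: (measurable_cylinder i (mP i)).
Qed.

Definition rat_box (c : 'rV[rat]_N) (r : rat) : set (Rn R N) :=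
  [set x | forall i, `|x ord0 i - ratr (c ord0 i)| < ratr r].

Lemma measurable_rat_box c r : measurable (rat_box c r : set cylRn).
Proof.
apply: (@measurable_coord_bigcap (fun i t => `|t - ratr (c ord0 i)| < ratr r)).
move=> i; rewrite (_ : [set t | _] =
  `](ratr (c ord0 i) - ratr r), (ratr (c ord0 i) + ratr r)[%classic).
  exact: measurable_itv.
by apply/seteqP; split => t /=; rewrite in_itv /= ltr_distl.
Qed.

Lemma open_rat_box (U : set (Rn R N)) x : open U -> U x ->
  exists cr : 'rV[rat]_N * rat, rat_box cr.1 cr.2 x /\ rat_box cr.1 cr.2 `<=` U.
Proof.
move=> oU Ux; have /nbhs_ballP[e e0 xeU] : nbhs x U by exact: oU.
have [r] := rat_in_itvoo (divr_gt0 e0 (ltr0n R 2)).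
rewrite in_itv /= => /andP[r0 re].
have /fin_all_exists[c xc] : forall i, exists q : rat, `|x ord0 i - ratr q| < ratr r.
  move=> i; have xr : x ord0 i - ratr r < x ord0 i + ratr r.
    by rewrite ltrBlDr -addrA ltrDl addr_gt0.
  have [q] := rat_in_itvoo xr.
  by rewrite in_itv /= => xq; exists q; rewrite ltr_distl; lra.
exists (\row_i c i, r); split => [i|y yb]; first by rewrite mxE.
apply: xeU; split => // i j; rewrite (ord1 i) /ball /=.
move: (yb j) (xc j); rewrite /= mxE !ltr_distl => /andP[y1 y2] /andP[x1 x2].
by apply/andP; split; lra.
Qed.

Lemma open_measurable_cyl (U : set (Rn R N)) : open U ->
  measurable (U : set cylRn).
Proof.
move=> oU.
pose F (cr : 'rV[rat]_N * rat) : set cylRn :=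
  if `[< rat_box cr.1 cr.2 `<=` U >] then rat_box cr.1 cr.2 else set0.
have -> : (U : set cylRn) = \bigcup_cr F cr.
  apply/seteqP; split => [x Ux|x [cr _]]; rewrite /F.
    have [cr [xcr crU]] := open_rat_box oU Ux.
    by exists cr => //; case: asboolP.
  by case: asboolP => // crU /crU.
apply: countable_bigcupT_measurable; first exact: countableP.
by move=> cr; rewrite /F; case: asboolP => _ //; exact: measurable_rat_box.
Qed.

Lemma borelRn_measurable (A : set (Rn R N)) : borelRn A ->
  measurable (A : set cylRn).
Proof.
move=> bA; apply: (smallest_sub (@sigma_algebra_measurable _ cylRn) _ bA).
by move=> U; exact: open_measurable_cyl.
Qed.

Lemma borel_fun_measurable (u : Rn R N -> R) : borel_fun u ->
  measurable_fun setT (u : cylRn -> R).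
Proof. by move=> bu _ B mB; rewrite setTI; apply: borelRn_measurable; exact: bu. Qed.

End CylinderSigmaAlgebra.

(* The integral of a nonnegative function is a supremum over simple minorants,
   so monotonicity needs no measurability. *)
Lemma ge0_le_integralT d (T : measurableType d) (R : realType)
    (mu : {measure set T -> \bar R}) (f g : T -> \bar R) :
  (forall t, (0 <= f t)%E) -> (forall t, (f t <= g t)%E) ->
  (\int[mu]_t f t <= \int[mu]_t g t)%E.
Proof.
move=> f0 fg; have g0 t : (0 <= g t)%E := le_trans (f0 t) (fg t).
rewrite !ge0_integralTE //; apply: ereal_sup_le => _ [h /= hf <-].
by exists h => //= t; exact: le_trans (hf t) (fg t).
Qed.

Section IteratedIntegral.
Variables (R : realType) (N : nat).
Local Notation cylRn := (cylRn R N).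
Implicit Types (F G : Rn R N -> \bar R) (k : nat).

Lemma setcoordE (x : Rn R N) k t i :
  setcoord x k t ord0 i = if (i : nat) == k then t else x ord0 i.
Proof. by rewrite /setcoord mxE. Qed.

Lemma measurable_setcoord_pair k :
  measurable_fun setT (fun p : cylRn * R => (setcoord p.1 k p.2 : cylRn)).
Proof.
apply: (@measurability _ _ _ cylRn setT _ (@coord_cylinders R N)) => //.
move=> _ [_ [i [B [mB ->]]] <-]; rewrite setTI.
have [ik|ik] := eqVneq (i : nat) k.
  rewrite (_ : _ @^-1` _ = setT `*` B); first exact: measurableX.
  apply/seteqP; split => -[x t]; rewrite /preimage /setX /= setcoordE ik eqxx //.
  by move=> -[].
rewrite (_ : _ @^-1` _ = [set x : cylRn | B (x ord0 i)] `*` setT).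
  by apply: measurableX => //; exact: measurable_cylinder.
apply/seteqP; split => -[x t]; rewrite /preimage /setX /= setcoordE (negPf ik) //.
by move=> -[].
Qed.

Lemma measurable_setcoord (x : Rn R N) k :
  measurable_fun setT (fun t : measurableTypeR R => (setcoord x k t : cylRn)).
Proof.
exact: measurableT_comp (measurable_setcoord_pair k) (pair1_measurable (x : cylRn)).
Qed.

Lemma iint_ge0 k F : (forall x, (0 <= F x)%E) -> forall x, (0 <= iint k F x)%E.
Proof.
move=> F0; elim: k => [//|k IH] x /=.
by apply: integral_ge0 => t _; exact: IH.
Qed.

Lemma measurable_iint k F : measurable_fun setT (F : cylRn -> \bar R) ->
  (forall x, (0 <= F x)%E) -> measurable_fun setT (iint k F : cylRn -> \bar R).
Proof.
move=> mF F0; elim: k => [//|k IH] /=.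
apply: (@measurable_fun_fubini_tonelli_F _ _ cylRn _ R (@lebesgue_measure R)
  (fun p : cylRn * R => iint k F (setcoord p.1 k p.2))).
  exact: measurableT_comp IH (measurable_setcoord_pair k).
by move=> p; exact: iint_ge0.
Qed.

Lemma measurable_iint_setcoord k F (x : Rn R N) j :
  measurable_fun setT (F : cylRn -> \bar R) -> (forall x, (0 <= F x)%E) ->
  measurable_fun setT (fun t => iint k F (setcoord x j t)).
Proof.
move=> mF F0.
exact: measurableT_comp (measurable_iint k mF F0) (measurable_setcoord x j).
Qed.

Lemma iintD k F G :
  measurable_fun setT (F : cylRn -> \bar R) -> (forall x, (0 <= F x)%E) ->
  measurable_fun setT (G : cylRn -> \bar R) -> (forall x, (0 <= G x)%E) ->
  forall x, iint k (fun y => F y + G y)%E x = (iint k F x + iint k G x)%E.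
Proof.
move=> mF F0 mG G0; elim: k => [//|k IH] x /=.
under eq_integral do rewrite IH.
apply: ge0_integralD => //.
- by move=> t _; exact: iint_ge0.
- exact: measurable_iint_setcoord.
- by move=> t _; exact: iint_ge0.
- exact: measurable_iint_setcoord.
Qed.

Lemma iintZl k (c : R) F : 0 <= c ->
  measurable_fun setT (F : cylRn -> \bar R) -> (forall x, (0 <= F x)%E) ->
  forall x, iint k (fun y => c%:E * F y)%E x = (c%:E * iint k F x)%E.
Proof.
move=> c0 mF F0; elim: k => [//|k IH] x /=.
under eq_integral do rewrite IH.
apply: ge0_integralZl => //; first exact: measurable_iint_setcoord.
by move=> t _; exact: iint_ge0.
Qed.

Lemma le_iint k F G : (forall x, (0 <= F x)%E) ->
  (forall x, (F x <= G x)%E) -> forall x, (iint k F x <= iint k G x)%E.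
Proof.
move=> F0 FG; elim: k => [//|k IH] x /=.
by apply: ge0_le_integralT => t; [exact: iint_ge0 | exact: IH].
Qed.

End IteratedIntegral.

Section CubeVolume.
Variables (R : realType) (N : nat).
Local Notation cylRn := (cylRn R N).

(* Only the coordinates of index at least k are constrained: this is what
   remains of [a, b]^N after iint k has integrated out the first k. *)
Definition cube_from (a b : R) (k : nat) : set (Rn R N) :=
  [set x | forall i : 'I_N, (k <= i)%N -> a <= x ord0 i <= b].

Lemma measurable_cube_from a b k : measurable (cube_from a b k : set cylRn).
Proof.
apply: (@measurable_coord_bigcap R N (fun i t => (k <= i)%N -> a <= t <= b)) => i.
case: (leqP k i) => _.
  rewrite (_ : [set t | _] = `[a, b]%classic); first exact: measurable_itv.
  by apply/seteqP; split => t /=; rewrite in_itv /=; [apply | move=> ? ?].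
by rewrite (_ : [set t | _] = setT) //; apply/seteqP; split.
Qed.

Lemma setcoord_cube_from a b k x t : (k < N)%N ->
  (setcoord x k t \in cube_from a b k) =
  (x \in cube_from a b k.+1) && (t \in `[a, b]%classic).
Proof.
move=> kN; apply/idP/andP; rewrite !in_setE /= in_itv /=.
  move=> xt; split => [i ki|].
    by move: (xt i (ltnW ki)); rewrite setcoordE gtn_eqF.
  by move: (xt (Ordinal kN) (leqnn k)); rewrite setcoordE eqxx.
move=> [xk tab] i ki; rewrite setcoordE.
by case: eqVneq => [//|ik]; apply: xk; rewrite ltn_neqAle eq_sym ik.
Qed.

Lemma iint_cube_from a b k x : a <= b -> (k <= N)%N ->
  iint k (fun y => (\1_(cube_from a b 0) y)%:E) x =
  ((b - a) ^+ k * \1_(cube_from a b k) x)%:E.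
Proof.
move=> ab; elim: k x => [x _|k IH x kN] /=; first by rewrite mul1r.
under eq_integral => t _ do rewrite IH 1?ltnW //.
pose c := (b - a) ^+ k * \1_(cube_from a b k.+1) x.
have c0 : 0 <= c by rewrite mulr_ge0 ?exprn_ge0 ?subr_ge0 // indicE.
have split_indic t : ((b - a) ^+ k * \1_(cube_from a b k) (setcoord x k t))%:E =
    (c%:E * (\1_(`[a, b]%classic) t)%:E)%E.
  by rewrite -EFinM /c -mulrA !indicE setcoord_cube_from // -mulnb natrM.
under eq_integral => t _ do rewrite split_indic.
have mab : measurable (`[a, b]%classic : set (measurableTypeR R)).
  exact: measurable_itv.
rewrite ge0_integralZl //.
  rewrite integral_indic // setIT /= lebesgue_measure_itv /= lte_fin.
  case: ltgtP ab => // [_ _|<- _]; last by rewrite mule0 subrr expr0n /= mul0r.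
  by rewrite -EFinB -EFinM /c exprSr; congr (_%:E); ring.
by apply/measurable_EFinP; exact: measurable_indic.
Qed.

Lemma intRn_cube a b : a <= b ->
  intRn (fun y => (\1_(cube_from a b 0) y)%:E) = ((b - a) ^+ N)%:E.
Proof.
move=> ab; rewrite /intRn iint_cube_from // indicE.
by rewrite (_ : _ \in _) ?mulr1 // inE => i; rewrite leqNgt ltn_ord.
Qed.

End CubeVolume.

Section NullSets.
Variables (R : realType) (N : nat).

Lemma intRn_indic_setD_null (A Z : set (Rn R N)) :
  measurable (A : set (cylRn R N)) -> nullRn Z ->
  (intRn (fun y => (\1_A y)%:E) <= intRn (fun y => (\1_(A `\` Z) y)%:E))%E.
Proof.
move=> mA [/borelRn_measurable mZ Z0].
have mAZ : measurable (A `\` Z : set (cylRn R N)) by exact: measurableD.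
have indic_ge0 (B : set (Rn R N)) y : (0 <= (\1_B y : R)%:E)%E by rewrite lee_fin.
have mindic (B : set (cylRn R N)) : measurable B ->
    measurable_fun setT (fun y => (\1_B y : R)%:E).
  by move=> mB; apply/measurable_EFinP/measurable_indicP.
rewrite -[X in (_ <= X)%E]adde0 -Z0 /intRn.
rewrite -(iintD N (mindic _ mAZ) (indic_ge0 _) (mindic _ mZ) (indic_ge0 _)).
apply: le_iint => // y; rewrite -EFinD lee_fin !indicE in_setD.
by case: (_ \in A); case: (_ \in Z); rewrite /= ?addr0 ?add0r ?lexx ?ler01.
Qed.

End NullSets.

Section YoungFunction.
Variables (R : realType) (m : R -> R).
Hypothesis ym : young_m m.

Let m_nondecreasing : {homo m : x y / x <= y}.
Proof. by case: ym => _ m_increasing _ _ _; exact: ltW_homo m_increasing. Qed.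

Lemma young_m_ge0 t : 0 <= t -> 0 <= m t.
Proof. by case: ym => _ _ _ m0 _ t0; rewrite -m0; exact: m_nondecreasing. Qed.

Let measurable_young_mE (D : set R) : measurable_fun D (fun t => (m t)%:E).
Proof.
apply/measurable_EFinP; apply: measurable_funS (measurableT) _ _ => //.
exact: nondecreasing_measurable.
Qed.

Let young_integral_ge0 a :
  (0 <= \int[@lebesgue_measure R]_(tau in `[0%R, a]) (m tau)%:E)%E.
Proof.
apply: integral_ge0 => t; rewrite /= in_itv /= => /andP[t0 _].
by rewrite lee_fin young_m_ge0.
Qed.

Let young_integral_fin a : 0 <= a ->
  (\int[@lebesgue_measure R]_(tau in `[0%R, a]) (m tau)%:E)%E \is a fin_num.
Proof.
move=> a0; rewrite ge0_fin_numE //.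
apply: (@le_lt_trans _ _ (\int[@lebesgue_measure R]_(tau in `[0%R, a]) (m a)%:E)%E).
  apply: ge0_le_integral => //.
  - by move=> t; rewrite /= in_itv /= => /andP[t0 _]; rewrite lee_fin young_m_ge0.
  - exact: measurable_young_mE.
  - by move=> t; rewrite /= in_itv /= => /andP[_ ta]; rewrite lee_fin m_nondecreasing.
by rewrite integral_cst //= lebesgue_measure_itv /=; case: ifP; rewrite ltry.
Qed.

Lemma YoungM_ge0 t : 0 <= YoungM m t.
Proof. exact/fine_ge0/young_integral_ge0. Qed.

Lemma YoungM_normr t : YoungM m `|t| = YoungM m t.
Proof. by rewrite /YoungM normr_id. Qed.

Lemma le_YoungM a b : `|a| <= `|b| -> YoungM m a <= YoungM m b.
Proof.
move=> ab; apply: fine_le; try exact: young_integral_fin.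
apply: ge0_subset_integral => //.
- exact: measurable_young_mE.
- by move=> t; rewrite /= in_itv /= => /andP[t0 _]; rewrite lee_fin young_m_ge0.
- move=> t; rewrite /= !in_itv /= => /andP[-> ta]; exact: le_trans ta ab.
Qed.

Lemma measurable_YoungM : measurable_fun setT (YoungM m).
Proof.
pose Mpos (v : R) := YoungM m (Order.max v 0).
have -> : YoungM m = Mpos \o Num.norm.
  by apply/funext => t /=; rewrite /Mpos max_l // YoungM_normr.
apply: measurableT_comp; last exact: normr_measurable.
apply: nondecreasing_measurable => // x y xy; apply: le_YoungM.
have max0_ge0 (v : R) : 0 <= Order.max v 0 by rewrite le_max lexx orbT.
by rewrite !ger0_norm //; exact: le_max2.
Qed.

Lemma le_YoungM_kernel (s n v e d : R) : 0 <= s -> 0 <= n -> 0 < e -> e <= d ->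
  YoungM m (v / d `^ s) / d `^ n <= YoungM m (v / e `^ s) / e `^ n.
Proof.
move=> s0 n0 e0 ed; have d0 : 0 < d := lt_le_trans e0 ed.
have es0 : 0 < e `^ s by exact: powR_gt0.
have ds0 : 0 < d `^ s by exact: powR_gt0.
apply: ler_pM; rewrite ?invr_ge0 ?YoungM_ge0 ?powR_ge0 //.
  apply: le_YoungM; rewrite !normrM !normrV ?unitfE ?gt_eqF //.
  rewrite (gtr0_norm es0) (gtr0_norm ds0) ler_wpM2l // lef_pV2 ?posrE //.
  by rewrite ge0_ler_powR // ?nnegrE ltW.
by rewrite lef_pV2 ?posrE ?powR_gt0 // ge0_ler_powR // ?nnegrE ltW.
Qed.

Lemma powR_le_YoungM_scaled (q T E v : R) : 0 <= q -> 0 < E ->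
  (forall t, T <= `|t| -> `|t| `^ q <= YoungM m t) ->
  `|v| `^ q <= E `^ q * (YoungM m (v / E) + T `^ q).
Proof.
move=> q0 E0 YMq.
have -> : `|v| = `|v / E| * E.
  by rewrite normrM normrV ?unitfE ?gt_eqF // (gtr0_norm E0) divfK ?gt_eqF.
rewrite (powRM _ (normr_ge0 _) (ltW E0)) [X in X <= _]mulrC.
apply: ler_wpM2l; first exact: powR_ge0.
have [Tv|vT] := leP T `|v / E|.
  by rewrite ler_wpDr ?powR_ge0 ?YMq.
rewrite ler_wpDl ?YoungM_ge0 //; apply: ge0_ler_powR => //; rewrite ?nnegrE ?ltW //.
exact: le_lt_trans (normr_ge0 _) vT.
Qed.

End YoungFunction.

Section YoungGrowth.
Variables (R : realType) (m : R -> R) (q : R).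
Hypotheses (ym : young_m m) (m_low_gt1 : 1 < m_low m).

(* If M vanished at some t > 0, the quotient t m(t) / M(t) would be
   t m(t) / 0 = 0, and m_low would be at most 0. *)
Lemma YoungM_gt0 t : 0 < t -> 0 < YoungM m t.
Proof.
move=> t0; rewrite lt_neqAle YoungM_ge0 // andbT; apply/eqP => M0.
suff /(lt_le_trans m_low_gt1) : m_low m <= 0 by rewrite ltr10.
rewrite (_ : 0 = t * m t / YoungM m t); last by rewrite -M0 invr0 mulr0.
apply: ge_inf; last by exists t => //=; rewrite in_itv /= andbT.
exists 0 => _ [r /= r0 <-]; move: r0; rewrite in_itv /= andbT => r0.
by rewrite divr_ge0 ?YoungM_ge0 ?mulr_ge0 ?young_m_ge0 ?ltW.
Qed.

Lemma YoungM_dominates_powR :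
  (fun t => `|t| `^ q / YoungM m t) x @[x --> +oo] --> 0 ->
  exists T, forall t, T <= `|t| -> `|t| `^ q <= YoungM m t.
Proof.
move=> lim0.
have [T0 [_ ratio_lt1]] :=
  @cvgr_lt R R _ _ (fun t => `|t| `^ q / YoungM m t) 0 lim0 1 ltr01.
exists (`|T0| + 1) => t Tt.
have T0t : T0 < `|t| by apply: lt_le_trans Tt; rewrite ltr_pwDr ?ler_norm.
have Mt0 : 0 < YoungM m `|t| by apply: YoungM_gt0; apply: lt_le_trans Tt.
move: (ratio_lt1 _ T0t); rewrite normr_id ltr_pdivrMr // mul1r YoungM_normr.
exact: ltW.
Qed.

End YoungGrowth.

Section EuclideanNorm.
Variables (R : realType) (N : nat).

Lemma coord_le_enorm (x : Rn R N) i : `|x ord0 i| <= enorm x.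
Proof.
rewrite /enorm -sqrtr_sqr ler_sqrt; last by apply: sumr_ge0 => j _; exact: sqr_ge0.
by rewrite (bigD1 i) //= lerDl; apply: sumr_ge0 => j _; exact: sqr_ge0.
Qed.

Lemma enorm_le_coord_bound (x : Rn R N) K : 0 <= K ->
  (forall i, `|x ord0 i| <= K) -> enorm x <= Num.sqrt (N%:R * K ^+ 2).
Proof.
move=> K0 xK; rewrite /enorm ler_sqrt ?mulr_ge0 ?sqr_ge0 //.
apply: (@le_trans _ _ (\sum_(i < N) K ^+ 2)).
  by apply: ler_sum => i _; rewrite -real_normK ?num_real // ler_sqr ?nnegrE.
by rewrite sumr_const card_ord mulr_natl.
Qed.

End EuclideanNorm.

Lemma sub_small_multiple_ge_half (R : realFieldType) (A B S J lam : R) :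
  0 <= A -> 0 <= B -> 0 < lam -> lam * (A + B + 1) < 1 / 4 ->
  1 < S -> J <= A * S + B -> 1 / 2 <= S - lam * J.
Proof.
move=> A0 B0 lam0 lam_small S1 JAB.
have lamJ : lam * J <= lam * A * S + lam * B.
  by rewrite -mulrA -mulrDr; apply: ler_wpM2l; first exact: ltW.
have : 0 <= (1 / 4 - lam * A) * (S - 1).
  by apply: mulr_ge0; [have := mulr_ge0 (ltW lam0) B0; nra | lra].
have := mulr_ge0 (ltW lam0) B0; nra.
Qed.

Lemma seminorm_le (R : realType) (N : nat) (M : R -> R) (s : R) (u : Rn R N -> R) l :
  0 < l -> (smodular M s u l <= 1)%E -> seminorm M s u <= l.
Proof.
move=> l0 ul; apply: ge_inf; last by split.
by exists 0 => r [r0 _]; exact: ltW.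
Qed.

Section ExteriorCube.
Variables (R : realType) (N : nat) (m : R -> R) (s : R) (Om : set (Rn R N)) (C : R).
Hypotheses (ym : young_m m) (s_ge0 : 0 <= s) (N_gt0 : (0 < N)%N) (C_ge0 : 0 <= C).
Hypothesis mOm : measurable (Om : set (cylRn R N)).
Hypothesis Om_coord_le : forall x, Om x -> forall i, `|x ord0 i| <= C.
Implicit Types (u : Rn R N -> R) (x y : Rn R N) (Z : set (Rn R N)).

Let far := @cube_from R N (C + 1) (C + 2) 0.
Let D := Num.sqrt (N%:R * (2 * C + 2) ^+ 2).
Let i0 := Ordinal N_gt0.

Let D_gt0 : 0 < D.
Proof. by rewrite sqrtr_gt0 mulr_gt0 ?ltr0n ?exprn_gt0 // ltr_wpDl ?mulr_ge0. Qed.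

Lemma far_cube_outside y : far y -> ~ Om y.
Proof.
move=> /(_ i0 isT) /andP[Cy _] /Om_coord_le /(_ i0); rewrite ler_norml.
by move=> /andP[_]; lra.
Qed.

Lemma dist_far_cube x y : Om x -> far y -> 1 <= enorm (x - y) <= D.
Proof.
move=> Ox fy; apply/andP; split.
  apply: le_trans (coord_le_enorm (x - y) i0); rewrite !mxE.
  move: (Om_coord_le Ox i0) (fy i0 isT); rewrite ler_norml => /andP[_ xC] /andP[Cy _].
  by rewrite ler0_norm; lra.
apply: enorm_le_coord_bound; first by rewrite addr_ge0 ?mulr_ge0.
move=> i; rewrite !mxE.
move: (Om_coord_le Ox i) (fy i isT); rewrite ler_norml => /andP[Cx xC] /andP[Cy yC].
by rewrite ler_norml; apply/andP; split; lra.
Qed.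

Lemma far_cube_minus_null_ge1 Z : nullRn Z ->
  (1 <= intRn (fun y => (\1_(far `\` Z) y)%:E))%E.
Proof.
move=> Z0; apply: le_trans (intRn_indic_setD_null (measurable_cube_from _ _ _) Z0).
rewrite intRn_cube; last lra.
by rewrite (_ : C + 2 - (C + 1) = 1) ?expr1n //; ring.
Qed.

Let indic_ge0 (A : set (Rn R N)) y : (0 <= (\1_A y : R)%:E)%E.
Proof. by rewrite lee_fin. Qed.

Let measurable_indicE (A : set (cylRn R N)) : measurable A ->
  measurable_fun setT (fun z => (\1_A z : R)%:E).
Proof. by move=> mA; apply/measurable_EFinP/measurable_indicP. Qed.

Let smodular_kernel_ge0 u x y : (0 <= (YoungM m ((u x - u y) / (1 * enorm (x - y) `^ s))
  / enorm (x - y) `^ N%:R)%:E)%E.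
Proof. by rewrite lee_fin divr_ge0 ?YoungM_ge0 ?powR_ge0. Qed.

Lemma far_cube_kernel_ge u Z x : nullRn Z -> [set y | ~ Om y /\ u y != 0] `<=` Z ->
  (((D `^ N%:R)^-1 * (YoungM m (u x / D `^ s) * \1_Om x))%:E <=
   intRn (fun y => (YoungM m ((u x - u y) / (1 * enorm (x - y) `^ s))
     / enorm (x - y) `^ N%:R)%:E))%E.
Proof.
move=> Z0 uZ; have [Ox|Ox] := pselect (Om x); last first.
  by rewrite indicE memNset // !mulr0; exact: iint_ge0.
rewrite indicE mem_set // mulr1.
set c := _ * _; have c0 : 0 <= c by rewrite mulr_ge0 ?invr_ge0 ?powR_ge0 ?YoungM_ge0.
have mfarZ : measurable (far `\` Z : set (cylRn R N)).
  by apply: measurableD; [exact: measurable_cube_from | exact: borelRn_measurable Z0.1].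
apply: (@le_trans _ _ (c%:E * intRn (fun y => (\1_(far `\` Z) y)%:E))%E).
  by rewrite -[X in (X <= _)%E]mule1 lee_wpmul2l ?lee_fin ?far_cube_minus_null_ge1.
rewrite /intRn -iintZl //; last exact: measurable_indicE.
apply: le_iint => y; first by rewrite -EFinM lee_fin mulr_ge0.
rewrite -EFinM lee_fin indicE.
have [[fy Zy]|fZy] := pselect ((far `\` Z) y); last first.
  by rewrite memNset // mulr0 -lee_fin.
have uy0 : u y = 0.
  by apply: contra_notP Zy => /eqP uy; apply: uZ; split => //; exact: far_cube_outside.
have /andP[xy1 xyD] := dist_far_cube Ox fy.
rewrite mem_set // mulr1 uy0 subr0 mul1r /c mulrC.
exact: le_YoungM_kernel (ler0n _ _) (lt_le_trans ltr01 xy1) xyD.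
Qed.

Lemma YoungM_integral_le_smodular u Z : borel_fun u -> nullRn Z ->
  [set y | ~ Om y /\ u y != 0] `<=` Z ->
  (intRn (fun x => (YoungM m (u x / D `^ s) * \1_Om x)%:E) <=
   (D `^ N%:R)%:E * smodular (YoungM m) s u 1)%E.
Proof.
move=> /borel_fun_measurable mu Z0 uZ.
have DN_gt0 : 0 < D `^ N%:R by exact: powR_gt0.
have mphi : measurable_fun setT
    (fun x : cylRn R N => (YoungM m (u x / D `^ s) * \1_Om x)%:E).
  apply/measurable_EFinP/measurable_funM; last exact: measurable_indic.
  by apply: measurableT_comp (measurable_YoungM ym) _; exact: measurable_funM.
have phi0 x : (0 <= (YoungM m (u x / D `^ s) * \1_Om x)%:E)%E.
  by rewrite lee_fin mulr_ge0 ?YoungM_ge0.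
set phi := intRn _.
rewrite (_ : phi = (D `^ N%:R)%:E * ((D `^ N%:R)^-1%:E * phi))%E; last first.
  by rewrite muleA -EFinM divff ?mul1e // lt0r_neq0.
apply: lee_wpmul2l; first by rewrite lee_fin ltW.
have DNV_ge0 : 0 <= (D `^ N%:R)^-1 by rewrite invr_ge0 ltW.
rewrite /phi /intRn -iintZl //.
apply: le_iint => x; first by apply: mule_ge0; [rewrite lee_fin | exact: phi0].
by rewrite -EFinM; exact: far_cube_kernel_ge Z0 uZ.
Qed.

Lemma intRn_indic_le_cube : (intRn (fun x => (\1_Om x)%:E) <= ((2 * C) ^+ N)%:E)%E.
Proof.
rewrite (_ : 2 * C = C - - C); last by ring.
rewrite -intRn_cube; last by rewrite -subr_ge0 opprK addr_ge0.
apply: le_iint => // x; rewrite lee_fin !indicE.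
have [Ox|Ox] := pselect (Om x); last by rewrite memNset.
by rewrite !mem_set // => i _; rewrite -ler_norml; exact: Om_coord_le.
Qed.

Lemma primG_integral_le (g : Rn R N -> R -> R) (C2 q T E : R) u :
  borel_fun u -> 0 <= C2 -> 0 <= q -> 0 < E ->
  (forall t, T <= `|t| -> `|t| `^ q <= YoungM m t) ->
  (forall x t, Om x -> 0 <= primG g x t <= C2 * `|t| `^ q) ->
  (intRn (fun x => (primG g x (u x) * \1_Om x)%:E) <=
   (C2 * E `^ q)%:E * (intRn (fun x => (YoungM m (u x / E) * \1_Om x)%:E) +
                       (T `^ q * (2 * C) ^+ N)%:E))%E.
Proof.
move=> /borel_fun_measurable mu C2_ge0 q_ge0 E_gt0 YMq hG.
pose phi x := YoungM m (u x / E) * \1_Om x.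
pose psi x := T `^ q * \1_Om x.
have mphi : measurable_fun setT (fun x : cylRn R N => (phi x)%:E).
  apply/measurable_EFinP/measurable_funM; last exact: measurable_indic.
  by apply: measurableT_comp (measurable_YoungM ym) _; exact: measurable_funM.
have mpsi : measurable_fun setT (fun x : cylRn R N => (psi x)%:E).
  apply/measurable_EFinP/measurable_funM; first exact: measurable_cst.
  exact: measurable_indic.
have phi0 x : (0 <= (phi x)%:E)%E by rewrite lee_fin mulr_ge0 ?YoungM_ge0.
have psi0 x : (0 <= (psi x)%:E)%E by rewrite lee_fin mulr_ge0 ?powR_ge0.
have a0 : 0 <= C2 * E `^ q by rewrite mulr_ge0 ?powR_ge0.
apply: (@le_trans _ _ ((C2 * E `^ q)%:E *
    (intRn (fun x => (phi x)%:E) + intRn (fun x => (psi x)%:E)))%E).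
  have msum : measurable_fun setT (fun x : cylRn R N => (phi x)%:E + (psi x)%:E)%E.
    exact: emeasurable_funD.
  have sum0 x : (0 <= (phi x)%:E + (psi x)%:E)%E by exact: adde_ge0.
  rewrite /intRn -(iintD N mphi phi0 mpsi psi0) -(iintZl N a0 msum sum0).
  apply: le_iint => x.
    rewrite lee_fin indicE; have [Ox|Ox] := pselect (Om x).
      by rewrite mem_set // mulr1; case/andP: (hG x (u x) Ox).
    by rewrite memNset ?mulr0.
  rewrite -EFinD -EFinM lee_fin /phi /psi indicE.
  have [Ox|Ox] := pselect (Om x); last by rewrite memNset // !mulr0 addr0 mulr0.
  rewrite mem_set // !mulr1 -mulrA; apply: le_trans (proj2 (andP (hG x (u x) Ox))) _.
  by rewrite ler_wpM2l // powR_le_YoungM_scaled.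
apply: lee_wpmul2l; first by rewrite lee_fin.
apply: leeD => //; rewrite /intRn (_ : (fun x => _) =
  (fun x => (T `^ q)%:E * (\1_Om x)%:E)%E); last by apply/funext => x; rewrite EFinM.
rewrite (iintZl N (powR_ge0 T q) (measurable_indicE mOm) (indic_ge0 Om)) EFinM.
by apply: lee_wpmul2l; [rewrite lee_fin powR_ge0 | exact: intRn_indic_le_cube].
Qed.

Lemma I_lam_ge_half (g : Rn R N -> R -> R) (C2 q T lam : R) u :
  0 <= C2 -> 0 <= q -> (forall t, T <= `|t| -> `|t| `^ q <= YoungM m t) ->
  (forall x t, Om x -> 0 <= primG g x t <= C2 * `|t| `^ q) -> 0 < lam ->
  lam * (C2 * (D `^ s) `^ q * D `^ N%:R +
         C2 * (D `^ s) `^ q * (T `^ q * (2 * C) ^+ N) + 1) < 1 / 4 ->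
  WsM0t (YoungM m) s Om u -> seminorm (YoungM m) s u = 2 ->
  ((1 / 2)%:E <= I_lam (YoungM m) s Om g lam u)%E.
Proof.
move=> C2_ge0 q_ge0 YMq hG lam_gt0 lam_small [[bu _ S_fin] _ [Z [Z0 uZ]]] semi2.
set a := C2 * (D `^ s) `^ q.
have a_ge0 : 0 <= a by rewrite mulr_ge0 ?powR_ge0.
set S := smodular (YoungM m) s u 1.
have S_gt1 : (1 < S)%E.
  by rewrite ltNge; apply/negP => /(seminorm_le ltr01); rewrite semi2; lra.
have S_ge0 : (0 <= S)%E by apply: iint_ge0 => x; exact: iint_ge0.
have SE : S = (fine S)%:E by rewrite fineK // ge0_fin_numE.
pose J := intRn (fun x => (primG g x (u x) * \1_Om x)%:E).
have J_ge0 : (0 <= J)%E.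
  apply: iint_ge0 => x; rewrite lee_fin indicE.
  have [Ox|Ox] := pselect (Om x); last by rewrite memNset ?mulr0.
  by rewrite mem_set // mulr1; case/andP: (hG x (u x) Ox).
have J_le : (J <= (a * D `^ N%:R * fine S + a * (T `^ q * (2 * C) ^+ N))%:E)%E.
  have E_gt0 : 0 < D `^ s by exact: powR_gt0.
  have := primG_integral_le bu C2_ge0 q_ge0 E_gt0 YMq hG.
  move/le_trans; apply.
  rewrite -mulrA -mulrDr [in X in (_ <= X)%E]EFinM.
  apply: lee_wpmul2l; first by rewrite lee_fin.
  rewrite EFinD leeD2r // EFinM -SE.
  exact: YoungM_integral_le_smodular bu Z0 uZ.
have JE : J = (fine J)%:E.
  by rewrite fineK // ge0_fin_numE //; apply: le_lt_trans J_le _; exact: ltry.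
have S'_gt1 : 1 < fine S by rewrite -lte_fin -SE; exact: S_gt1.
have J'_le : fine J <= a * D `^ N%:R * fine S + a * (T `^ q * (2 * C) ^+ N).
  by rewrite -lee_fin -JE.
rewrite /I_lam -/S -/J SE JE -EFinM -EFinB lee_fin.
apply: sub_small_multiple_ge_half lam_gt0 lam_small S'_gt1 J'_le.
  by rewrite mulr_ge0 ?powR_ge0.
by rewrite mulr_ge0 // mulr_ge0 ?powR_ge0 // exprn_ge0 // mulr_ge0.
Qed.

Lemma I_lam_ge_half_small_lam (g : Rn R N -> R -> R) (C2 q T : R) :
  0 <= C2 -> 0 <= q -> (forall t, T <= `|t| -> `|t| `^ q <= YoungM m t) ->
  (forall x t, Om x -> 0 <= primG g x t <= C2 * `|t| `^ q) ->
  exists lams, 0 < lams /\ forall lam, 0 < lam < lams -> forall u,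
    WsM0t (YoungM m) s Om u -> seminorm (YoungM m) s u = 2 ->
    ((1 / 2)%:E <= I_lam (YoungM m) s Om g lam u)%E.
Proof.
move=> C2_ge0 q_ge0 YMq hG.
pose a := C2 * (D `^ s) `^ q.
pose K := a * D `^ N%:R + a * (T `^ q * (2 * C) ^+ N) + 1.
have K_gt0 : 0 < K.
  by rewrite ltr_wpDl // addr_ge0 // !mulr_ge0 ?powR_ge0 ?exprn_ge0 ?mulr_ge0.
exists (1 / (4 * K)); split => [|lam /andP[lam_gt0 lam_lt] u].
  by rewrite divr_gt0 // mulr_gt0.
apply: (I_lam_ge_half C2_ge0 q_ge0 YMq hG lam_gt0).
by move: lam_lt; rewrite ltr_pdivlMr ?mulr_gt0 // -/a -/K; lra.
Qed.

End ExteriorCube.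

Unset Implicit Arguments. Set Strict Implicit.

Theorem lemma4p1 (R : realType) (N : nat) (Om : set (Rn R N)) (s : R)
  (m : R -> R) (p q : R) (g : Rn R N -> R -> R) (C0 C1 C2 : R) :
  smooth_bounded_domain Om ->
  0 < s < 1 ->
  young_m m ->
  1 < m_low m -> m_up_finite m ->
  cond_S (YoungM m) ->
  1 < p < N%:R ->
  1 < q -> q < N%:R * p / (N%:R - p) -> q < m_low m ->
  (fun t => `|t| `^ q / YoungM m t) x @[x --> +oo] --> 0 ->
  caratheodory Om g ->
  0 < C0 -> 0 < C1 -> 0 < C2 ->
  (forall x t, Om x -> `|g x t| <= C0 * `|t| `^ (q - 1)) ->
  (forall x t, Om x ->
     C1 * `|t| `^ q <= primG g x t /\ primG g x t <= C2 * `|t| `^ q) ->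
  exists lams : R, 0 < lams /\
    forall lam : R, 0 < lam < lams ->
      exists rho alpha : R, [/\ 0 < rho, 0 < alpha &
        forall u : Rn R N -> R, WsM0t (YoungM m) s Om u ->
          seminorm (YoungM m) s u = rho ->
          (alpha%:E <= I_lam (YoungM m) s Om g lam u)%E].
Proof.
move=> [oOm _ _ [CO Om_bnd] _] /andP[s_gt0 _] ym m_low_gt1 _ _ /andP[p_gt1 p_ltN]
  q_gt1 _ _ lim0 _ _ C1_gt0 C2_gt0 _ hG.
have N_gt0 : (0 < N)%N by rewrite -(ltr0n R); lra.
have Om_coord_le x : Om x -> forall i, `|x ord0 i| <= `|CO|.
  move=> Ox i; apply: le_trans (coord_le_enorm x i) (le_trans (Om_bnd x Ox) _).
  exact: ler_norm.
have [T YMq] := YoungM_dominates_powR ym m_low_gt1 lim0.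
have G_bounds x t : Om x -> 0 <= primG g x t <= C2 * `|t| `^ q.
  move=> Ox; have [G_ge G_le] := hG x t Ox; rewrite G_le andbT.
  by apply: le_trans G_ge; rewrite mulr_ge0 ?powR_ge0 // ltW.
have [lams [lams_gt0 I_ge_half]] := I_lam_ge_half_small_lam ym (ltW s_gt0) N_gt0
  (normr_ge0 CO) (open_measurable_cyl oOm) Om_coord_le (ltW C2_gt0)
  (ltW (lt_trans ltr01 q_gt1)) YMq G_bounds.
exists lams; split => // lam lam_in; exists 2, (1 / 2).
by split => //; exact: I_ge_half.
Qed.
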